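(* In the motivic Steenrod algebra (over an algebraically closed field of characteristic 0), let $P^RP^S=\sum_X\tau^{u(X)}b(X)P^{T(X)}$ be the Milnor product formula. If for a Milnor matrix $X$ one has $b(X)=1$ and $v(T(X))=v(R)+v(S)$, then $u(X)=0$.
   Context: $\mathbb{M}_2=\mathbb{F}_2[\tau]$, $\tau$ of bidegree $(0,1)$. The Milnor basis of the motivic Steenrod algebra $A$ over $\mathbb{M}_2$ consists of $P^R$ for finite sequences $R=(r_1,r_2,\dots)$ of nonnegative integers, with $P^R$ of bidegree $\big(\sum r_i(2^i-1),\sum\lfloor r_i(2^i-1)/2\rfloor\big)$. The Milnor product formula: $X=(x_{ij})_{i,j\ge0}$ ranges over matrices of nonnegative integers ($x_{00}$ ignored) with $\sum_j2^jx_{ij}=r_i$ for $i\ge1$ and $\sum_ix_{ij}=s_j$ for $j\ge1$; $T(X)=(t_1,t_2,\dots)$ with $t_n=\sum_{i+j=n}x_{ij}$; $b(X)\in\mathbb{F}_2$ is the product over $n$ of the multinomial coefficients $t_n!/\prod_{i+j=n}x_{ij}!$ mod 2; and $u(X)\ge0$ is the integer forced by homogeneity, namely $u(X)=C(P^R)+C(P^S)-C(P^{T(X)})$, where the Chow weight of an element of bidegree $(p,q)$ is $C=2q-p$. For $R=(r_1,r_2,\dots)$ with 2-adic expansions $r_i=\sum_ka_{ik}2^k$, set $v(R)=\sum_{i,k}i\,a_{ik}$. *)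

From mathcomp Require Import all_boot all_order all_algebra.
Set Implicit Arguments. Unset Strict Implicit. Unset Printing Implicit Defensive.
Import GRing.Theory Num.Theory.

(* A Milnor-basis index R = (r_1, r_2, ...) is a finite sequence [:: r_1; r_2; ...]
   (entry at position k is r_{k+1}; implicit zeros beyond its size). *)
Definition ridx (R : seq nat) (i : nat) : nat := nth 0 R i.-1.

(* Bidegree (p, q) of P^R. *)
Definition topdeg (R : seq nat) : nat :=
  \sum_(k < size R) nth 0 R k * (2 ^ k.+1 - 1).
Definition wtdeg (R : seq nat) : nat :=
  \sum_(k < size R) (nth 0 R k * (2 ^ k.+1 - 1)) %/ 2.

Definition chow (R : seq nat) : int := (2 * wtdeg R)%:Z - (topdeg R)%:Z.

Definition bit (r k : nat) : nat := odd (r %/ 2 ^ k).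
Definition vfun (R : seq nat) : nat :=
  \sum_(k < size R) k.+1 * \sum_(l < (nth 0 R k).+1) bit (nth 0 R k) l.

Definition supported (N : nat) (X : nat -> nat -> nat) : Prop :=
  forall i j, N < i \/ N < j -> X i j = 0.

(* X is a Milnor matrix for the product P^R P^S (x_00 is ignored). *)
Definition milnor_matrix (N : nat) (X : nat -> nat -> nat) (R S : seq nat) : Prop :=
  supported N X /\
  (forall i, 1 <= i -> \sum_(j < N.+1) 2 ^ j * X i j = ridx R i) /\
  (forall j, 1 <= j -> \sum_(i < N.+1) X i j = ridx S j).

Definition tn (X : nat -> nat -> nat) (n : nat) : nat :=
  \sum_(i < n.+1) X i (n - i).

(* T(X) = (t_1, ..., t_{2N}); all further t_n vanish. *)
Definition Tseq (N : nat) (X : nat -> nat -> nat) : seq nat :=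
  mkseq (fun k => tn X k.+1) (2 * N).

(* b(X) in F_2 (as 0 or 1): product of multinomials t_n! / prod_{i+j=n} x_{ij}! mod 2. *)
Definition bcoef (N : nat) (X : nat -> nat -> nat) : nat :=
  (\prod_(1 <= n < (2 * N).+1)
      ((tn X n)`! %/ \prod_(i < n.+1) (X i (n - i))`!)) %% 2.

Definition uexp (N : nat) (X : nat -> nat -> nat) (R S : seq nat) : int :=
  chow R + chow S - chow (Tseq N X).

From mathcomp Require Import all_boot all_order all_algebra zify.
Import GRing.Theory.

(* Since 2^k - 1 is odd, the Chow weight of P^R is minus the number of odd
   entries of R, so u(X) = 0 says that odd entries are additive.  The tool is
   the binary digit sum s_2 and Legendre's formula v_2(n!) = n - s_2(n):
   s_2 is subadditive, strictly so when two odd numbers are added, and a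
   multinomial coefficient is odd exactly when the sum has no carries.
   - b(X) = 1 makes every anti-diagonal t_n = sum_{i+j=n} x_ij carry-free,
     so v(T(X)) = sum_{i,j} (i + j) s_2(x_ij) and each anti-diagonal has at
     most one odd entry.
   - Rows r_i = sum_j 2^j x_ij and columns s_j = sum_i x_ij bound the same
     weighted sum from below by v(R) + v(S), plus j for each column j with two
     odd entries; v(T) = v(R) + v(S) thus forbids such columns.
   - Counting odd entries of X along anti-diagonals, rows and columns then
     gives #odd T(X) = #odd R + #odd S. *)

(* Binary digit sum s_2(n), defined by recursion on the binary expansion
   with enough fuel: the fuel n suffices since n halves at each step. *)
Fixpoint dsum_fuel (fuel n : nat) : nat :=
  if fuel is fuel'.+1 then odd n + dsum_fuel fuel' n./2 else 0.
Definition dsum (n : nat) : nat := dsum_fuel n n.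

Lemma dsum_fuelE K n : n < 2 ^ K -> dsum_fuel K n = dsum n.
Proof.
have stable k : forall m, m < 2 ^ k -> forall e, dsum_fuel (k + e) m = dsum_fuel k m.
  elim: k => [|k IH] m lt_m e /=.
    by move: lt_m; rewrite expn0 ltnS leqn0 => /eqP->; elim: e.
  by rewrite IH // ltn_half_double -mul2n -expnS.
move=> lt_n; rewrite /dsum; case: (leqP K n) => [le_Kn|lt_nK].
  by rewrite -{2}(subnKC le_Kn) stable.
by rewrite -(subnKC (ltnW lt_nK)) stable // ltn_expl.
Qed.

Lemma dsumE n : dsum n = odd n + dsum n./2.
Proof.
case: n => [|n] //; rewrite {1}/dsum /=; congr (_ + _); apply: dsum_fuelE.
apply: leq_ltn_trans (ltn_expl n (isT : 1 < 2)).
by rewrite uphalf_half -{3}(odd_double_half n); lia.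
Qed.

Lemma dsum_bit (b : bool) m : dsum (b + m.*2) = b + dsum m.
Proof. by rewrite dsumE half_bit_double oddD odd_double addbF oddb. Qed.

Lemma dsum_double m : dsum m.*2 = dsum m.
Proof. exact: (dsum_bit false). Qed.

Lemma dsum_pow2_mul j x : dsum (2 ^ j * x) = dsum x.
Proof. by elim: j => [|j IH]; rewrite ?mul1n // expnS -mulnA mul2n dsum_double. Qed.

(* Adding 1 to n clears the block of trailing 1s: s_2(n+1) = s_2(n) + 1 - v_2(n+1). *)
Lemma dsum_succ n : dsum n.+1 + logn 2 n.+1 = dsum n + 1.
Proof.
elim/ltn_ind: n => n IH; rewrite -(odd_double_half n).
case odd_n: (odd n) => /=; last first.
  by rewrite -[(_ + _).+1]/(true + n./2.*2) dsum_bit add0n dsum_double lognE /= dvdn2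
             oddS odd_double addn0 addnC.
have lt_half : n./2 < n by rewrite ltn_half_double; case: n {IH} odd_n => [|n] //= _; lia.
rewrite -doubleS dsum_double -[1 + _]/(true + n./2.*2) dsum_bit -mul2n lognM // -[logn 2 2]/1.
by rewrite addnCA IH //; lia.
Qed.

Lemma logn2_fact n : logn 2 n`! + dsum n = n.
Proof.
elim: n => [|n IH] //; rewrite factS lognM ?fact_gt0 //.
by have := dsum_succ n; lia.
Qed.

Lemma sum_bits r : \sum_(l < r.+1) bit r l = dsum r.
Proof.
have fuelE K n : \sum_(l < K) bit n l = dsum_fuel K n.
  elim: K n => [|K IH] n; first by rewrite big_ord0.
  rewrite big_ord_recl /= -IH /bit expn0 divn1; congr (_ + _).
  by apply: eq_bigr => i _; rewrite expnS divnMA divn2.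
by rewrite fuelE dsum_fuelE // ltnW // ltn_expl.
Qed.

Lemma dsum_binomial a b : dsum a + dsum b = dsum (a + b) + logn 2 'C(a + b, a).
Proof.
have := bin_fact (leq_addr b a); rewrite addKn => /(congr1 (logn 2)).
rewrite !lognM ?muln_gt0 ?fact_gt0 ?bin_gt0 ?leq_addr //.
by have := logn2_fact a; have := logn2_fact b; have := logn2_fact (a + b); lia.
Qed.

(* Adding two odd numbers produces a carry: 'C(a + b, a) is then even. *)
Lemma binomial_odd_even a b : odd a -> odd b -> ~~ odd 'C(a + b, a).
Proof.
case: a => [|m] // odd_a odd_b.
have := mul_bin_diag (m.+1 + b) m; rewrite addSn /= => /(congr1 odd).
by rewrite !oddM -addSn oddD odd_a odd_b /= => <-.
Qed.

Lemma dsum_add a b : dsum (a + b) + (odd a && odd b) <= dsum a + dsum b.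
Proof.
rewrite dsum_binomial leq_add2l; case: (boolP (odd a && odd b)) => //= /andP[oa ob].
have C_gt0 : 0 < 'C(a + b, a) by rewrite bin_gt0 leq_addr.
by rewrite lognE C_gt0 dvdn2 binomial_odd_even.
Qed.

Lemma odd_sum K (a : nat -> nat) :
  odd (\sum_(k < K) a k) = odd (\sum_(k < K) odd (a k)).
Proof.
elim: K => [|K IH]; first by rewrite !big_ord0.
by rewrite !big_ord_recr /= !oddD IH oddb.
Qed.

Lemma dsum_sum K (a : nat -> nat) :
  dsum (\sum_(k < K) a k) + (1 < \sum_(k < K) odd (a k)) <= \sum_(k < K) dsum (a k).
Proof.
elim: K => [|K IH]; first by rewrite !big_ord0.
rewrite !big_ord_recr /=.
have := dsum_add (\sum_(k < K) a k) (a K); rewrite odd_sum.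
move: IH; case: (odd (a K)) => /=;
  case: (\sum_(k < K) odd (a k)) => [|[|c]] /=; rewrite ?andbF ?andbT /=; lia.
Qed.

Lemma odd_sum_le1 K (a : nat -> nat) : \sum_(k < K) odd (a k) <= 1 ->
  odd (\sum_(k < K) a k) = \sum_(k < K) odd (a k) :> nat.
Proof. by rewrite odd_sum; case: (\sum_(k < K) odd (a k)) => [|[|c]]. Qed.

Lemma carry_free_odds K (a : nat -> nat) :
  dsum (\sum_(k < K) a k) = \sum_(k < K) dsum (a k) -> \sum_(k < K) odd (a k) <= 1.
Proof.
move=> no_carry; have := dsum_sum K a; rewrite no_carry -[leqRHS]addn0 leq_add2l.
by rewrite leqn0 eqb0 -leqNgt.
Qed.

Lemma fact_prod_dvd K (a : nat -> nat) :
  \prod_(k < K) (a k)`! %| (\sum_(k < K) a k)`!.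
Proof.
elim: K => [|K IH]; first by rewrite !big_ord0.
rewrite !big_ord_recr /= -(bin_fact (leq_addr (a K) _)) addKn.
exact: dvdn_mull (dvdn_mul IH (dvdnn _)).
Qed.

Lemma odd_multinomial_dsum K (a : nat -> nat) :
  odd ((\sum_(k < K) a k)`! %/ \prod_(k < K) (a k)`!) ->
  dsum (\sum_(k < K) a k) = \sum_(k < K) dsum (a k).
Proof.
set t := \sum_(k < K) a k; set P := \prod_(k < K) (a k)`! => odd_M.
have P_gt0 : 0 < P by rewrite prodn_gt0 // => k; exact: fact_gt0.
have logP : logn 2 P = \sum_(k < K) logn 2 (a k)`!.
  rewrite /P; elim: K {t P odd_M P_gt0} => [|K IH]; first by rewrite !big_ord0.
  by rewrite !big_ord_recr lognM ?IH ?fact_gt0 ?prodn_gt0 // => k; exact: fact_gt0.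
have logM : logn 2 ((t`! %/ P) * P) = logn 2 P.
  by rewrite (lognM _ (odd_gt0 odd_M) P_gt0) lognE dvdn2 odd_M andbF.
have facts : \sum_(k < K) (logn 2 (a k)`! + dsum (a k)) = t.
  by apply: eq_bigr => k _; rewrite logn2_fact.
move: logM; rewrite divnK ?fact_prod_dvd // logP => logt.
by move: facts (logn2_fact t); rewrite big_split /= -logt; lia.
Qed.

Definition odds (R : seq nat) : nat := \sum_(k < size R) odd (nth 0 R k).

(* Since (2^k - 1) r is congruent to r mod 2, 2q - p = -(number of odd r_k). *)
Lemma chow_odds R : chow R = (- (odds R)%:Z)%R.
Proof.
have top : topdeg R = 2 * wtdeg R + odds R.
  rewrite /topdeg /wtdeg /odds big_distrr -big_split /=; apply: eq_bigr => k _.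
  have odd_term : odd (nth 0 R k * (2 ^ k.+1 - 1)) = odd (nth 0 R k).
    by rewrite oddM oddB ?expn_gt0 // oddX /= andbT.
  by rewrite -odd_term -modn2 [2 * _]mulnC -divn_eq.
by rewrite /chow top PoszD opprD addrA subrr add0r.
Qed.

Lemma vfunE R : vfun R = \sum_(k < size R) k.+1 * dsum (nth 0 R k).
Proof. by apply: eq_bigr => k _; rewrite sum_bits. Qed.

Lemma big_ord_extend0 A B (f : nat -> nat) : A <= B ->
  (forall k, A <= k -> f k = 0) -> \sum_(k < A) f k = \sum_(k < B) f k.
Proof.
move=> le_AB f0; rewrite (big_ord_widen B f le_AB) big_mkcond /=.
by apply: eq_bigr => k _; case: ltnP => // /f0 ->.
Qed.

Lemma sum_index_trunc (F : nat -> nat -> nat) R M : (forall k, F k 0 = 0) ->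
  (forall k, M <= k -> nth 0 R k = 0) ->
  \sum_(k < size R) F k (nth 0 R k) = \sum_(k < M) F k (ridx R k.+1).
Proof.
move=> F0 tail; pose B := maxn (size R) M.
rewrite (@big_ord_extend0 _ B (fun k => F k (nth 0 R k))) ?leq_maxl //; last first.
  by move=> k /(nth_default 0) ->.
by rewrite [RHS](@big_ord_extend0 _ B (fun k => F k (nth 0 R k))) ?leq_maxr // => k /tail ->.
Qed.

Lemma sum_antidiagonals (f : nat -> nat -> nat) K :
  \sum_(n < K) \sum_(i < n.+1) f i (n - i) = \sum_(i < K) \sum_(j < K - i) f i j.
Proof.
elim: K => [|K IH]; first by rewrite !big_ord0.
rewrite big_ord_recr /= IH.
rewrite [RHS](eq_bigr (fun i : 'I_K.+1 => \sum_(j < K - i) f i j + f i (K - i))).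
  by rewrite big_split /= [X in _ = X + _]big_ord_recr /= subnn big_ord0 addn0.
move=> i _; have le_iK : i <= K by rewrite -ltnS.
by rewrite -!(big_mkord xpredT) (subSn le_iK) big_nat_recr.
Qed.

Lemma sum_antidiagonals_square (f : nat -> nat -> nat) N :
  (forall i j, N < i \/ N < j -> f i j = 0) ->
  \sum_(n < (2 * N).+1) \sum_(i < n.+1) f i (n - i) =
  \sum_(i < N.+1) \sum_(j < N.+1) f i j.
Proof.
move=> f0; rewrite sum_antidiagonals.
rewrite [RHS](@big_ord_extend0 N.+1 (2 * N).+1 (fun i => \sum_(j < N.+1) f i j)); first last.
- by move=> i lt_Ni; rewrite big1 // => j _; apply: f0; left.
- by lia.
apply: eq_bigr => i _; case: (leqP i N) => [le_iN|lt_Ni].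
  rewrite [RHS](@big_ord_extend0 N.+1 ((2 * N).+1 - i) (f i)) //; first by lia.
  by move=> j ?; apply: f0; right.
by rewrite !big1 // => j _; apply: f0; left.
Qed.

Section MilnorMatrix.

Variables (N : nat) (X : nat -> nat -> nat) (R S : seq nat).
Hypothesis X_supp : supported N X.
Hypothesis X_rows : forall i, 1 <= i -> \sum_(j < N.+1) 2 ^ j * X i j = ridx R i.
Hypothesis X_cols : forall j, 1 <= j -> \sum_(i < N.+1) X i j = ridx S j.

Lemma R_tail k : N <= k -> nth 0 R k = 0.
Proof.
move=> le_Nk; rewrite -[nth 0 R k]/(ridx R k.+1) -X_rows //.
by apply: big1 => j _; rewrite X_supp ?muln0 //; left.
Qed.

Lemma S_tail k : N <= k -> nth 0 S k = 0.
Proof.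
move=> le_Nk; rewrite -[nth 0 S k]/(ridx S k.+1) -X_cols //.
by apply: big1 => i _; apply: X_supp; right.
Qed.

Lemma row_odd i : 0 < i -> odd (ridx R i) = odd (X i 0).
Proof.
move=> i_gt0; rewrite -X_rows // big_ord_recl /= oddD expn0 mul1n.
rewrite (odd_sum N (fun j => 2 ^ j.+1 * X i j.+1)) big1 ?addbF //.
by move=> j _; rewrite oddM oddX.
Qed.

Lemma row_dsum i : 0 < i -> dsum (ridx R i) <= \sum_(j < N.+1) dsum (X i j).
Proof.
move=> i_gt0; rewrite -X_rows //.
have shift : \sum_(j < N.+1) dsum (2 ^ j * X i j) = \sum_(j < N.+1) dsum (X i j).
  by apply: eq_bigr => j _; exact: dsum_pow2_mul.
rewrite -shift; exact: leq_trans (leq_addr _ _) (dsum_sum N.+1 (fun j => 2 ^ j * X i j)).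
Qed.

Definition col_odds (j : nat) : nat := \sum_(i < N.+1) odd (X i j).

Lemma col_dsum j : 0 < j ->
  dsum (ridx S j) + (1 < col_odds j) <= \sum_(i < N.+1) dsum (X i j).
Proof. by move=> j_gt0; rewrite -X_cols //; exact: (dsum_sum N.+1 (X^~ j)). Qed.

Lemma sum_Tseq_box (F : nat -> nat -> nat) : (forall n, F n 0 = 0) ->
  (forall n, n <= 2 * N -> F n (tn X n) = \sum_(i < n.+1) F n (X i (n - i))) ->
  F 0 (X 0 0) + \sum_(k < size (Tseq N X)) F k.+1 (nth 0 (Tseq N X) k) =
  \sum_(i < N.+1) \sum_(j < N.+1) F (i + j) (X i j).
Proof.
move=> F0 F_diag; rewrite size_mkseq.
transitivity (\sum_(n < (2 * N).+1) F n (tn X n)).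
  rewrite big_ord_recl /tn big_ord1; congr (_ + _).
  by apply: eq_bigr => k _; rewrite nth_mkseq.
rewrite -(sum_antidiagonals_square (fun i j => F (i + j) (X i j))); last first.
  by move=> i j /X_supp ->; exact: F0.
apply: eq_bigr => n _; rewrite F_diag; last by rewrite -ltnS.
by apply: eq_bigr => i _; rewrite subnKC // -ltnS.
Qed.

Lemma vfun_R : vfun R = \sum_(i < N.+1) i * dsum (ridx R i).
Proof.
rewrite vfunE (sum_index_trunc (fun k r => k.+1 * dsum r) R N (fun k => muln0 _) R_tail).
by rewrite big_ord_recl mul0n.
Qed.

Lemma vfun_S : vfun S = \sum_(j < N.+1) j * dsum (ridx S j).
Proof.
rewrite vfunE (sum_index_trunc (fun k r => k.+1 * dsum r) S N (fun k => muln0 _) S_tail).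
by rewrite big_ord_recl mul0n.
Qed.

Lemma box_weight_bound :
  vfun R + vfun S + \sum_(j < N.+1) j * (1 < col_odds j) <=
  \sum_(i < N.+1) \sum_(j < N.+1) (i + j) * dsum (X i j).
Proof.
have split_box : \sum_(i < N.+1) \sum_(j < N.+1) (i + j) * dsum (X i j) =
    \sum_(i < N.+1) i * \sum_(j < N.+1) dsum (X i j) +
    \sum_(j < N.+1) j * \sum_(i < N.+1) dsum (X i j).
  rewrite [X in _ = _ + X](eq_bigr (fun j : 'I_N.+1 => \sum_(i < N.+1) j * dsum (X i j)));
    last by move=> j _; rewrite big_distrr.
  rewrite [X in _ = _ + X]exchange_big -big_split; apply: eq_bigr => i _.
  by rewrite big_distrr -big_split; apply: eq_bigr => j _; rewrite mulnDl.
rewrite split_box vfun_R vfun_S -addnA -big_split /=.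
apply: leq_add; apply: leq_sum => i _.
  by rewrite leq_mul2l; have [-> //|i_gt0] := posnP i; rewrite row_dsum ?orbT.
by rewrite -mulnDr leq_mul2l; have [-> //|i_gt0] := posnP i; rewrite col_dsum ?orbT.
Qed.

Section OddCoefficient.

Hypothesis X_bcoef : bcoef N X = 1.

Lemma diagonal_multinomial_odd n : 0 < n -> n <= 2 * N ->
  odd ((tn X n)`! %/ \prod_(i < n.+1) (X i (n - i))`!).
Proof.
move=> n_gt0 le_n2N.
have : ~~ (2 %| \prod_(1 <= m < (2 * N).+1) ((tn X m)`! %/ \prod_(i < m.+1) (X i (m - i))`!)).
  by move: X_bcoef; rewrite /bcoef modn2 dvdn2 negbK; case: odd.
rewrite Euclid_dvd_prod // big_has => /hasPn /(_ n).
by rewrite mem_index_iota n_gt0 ltnS le_n2N dvdn2 negbK; apply.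
Qed.

Lemma diagonal_no_carry n : n <= 2 * N ->
  dsum (tn X n) = \sum_(i < n.+1) dsum (X i (n - i)).
Proof.
case: n => [|n] le_n2N; first by rewrite /tn !big_ord1.
apply: (odd_multinomial_dsum n.+2 (fun i => X i (n.+1 - i))).
exact: diagonal_multinomial_odd.
Qed.

Lemma vfun_Tseq_box :
  vfun (Tseq N X) = \sum_(i < N.+1) \sum_(j < N.+1) (i + j) * dsum (X i j).
Proof.
rewrite vfunE -(sum_Tseq_box (fun n t => n * dsum t)) ?mul0n // => [n|n le_n2N].
  by rewrite muln0.
by rewrite diagonal_no_carry // big_distrr.
Qed.

Lemma odds_Tseq_box :
  odd (X 0 0) + odds (Tseq N X) = \sum_(i < N.+1) \sum_(j < N.+1) odd (X i j).
Proof.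
apply: (sum_Tseq_box (fun _ t => odd t)) => // n le_n2N.
apply: (odd_sum_le1 n.+1 (fun i => X i (n - i))).
exact: (carry_free_odds n.+1 (fun i => X i (n - i)) (diagonal_no_carry n le_n2N)).
Qed.

Hypothesis v_additive : vfun (Tseq N X) = vfun R + vfun S.

(* Equality v(T) = v(R) + v(S) leaves no room for carries in the columns. *)
Lemma columns_carry_free j : 0 < j -> col_odds j <= 1.
Proof.
move=> j_gt0; case: (leqP j N) => [le_jN|lt_Nj]; last first.
  by rewrite /col_odds big1 // => i _; rewrite X_supp //; right.
have no_extra : \sum_(k < N.+1) k * (1 < col_odds k) = 0.
  by have := box_weight_bound; rewrite -vfun_Tseq_box v_additive; lia.
move/eqP: no_extra; rewrite sum_nat_eq0 => /forallP /(_ (Ordinal (le_jN : j < N.+1))) /=.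
by rewrite muln_eq0 eqb0 -leqNgt (gtn_eqF j_gt0).
Qed.

Lemma odds_additive : odds (Tseq N X) = odds R + odds S.
Proof.
have oddsR : odds R = \sum_(i < N) odd (X i.+1 0).
  rewrite /odds (sum_index_trunc (fun _ r => nat_of_bool (odd r)) R N) //; last exact: R_tail.
  by apply: eq_bigr => i _; rewrite row_odd.
have oddsS : odds S = \sum_(j < N) col_odds j.+1.
  rewrite /odds (sum_index_trunc (fun _ r => nat_of_bool (odd r)) S N) //; last exact: S_tail.
  apply: eq_bigr => j _; rewrite -X_cols // (odd_sum_le1 N.+1 (X^~ j.+1)) //.
  exact: columns_carry_free.
have box : \sum_(i < N.+1) \sum_(j < N.+1) odd (X i j) =
    odd (X 0 0) + \sum_(i < N) odd (X i.+1 0) + \sum_(j < N) col_odds j.+1.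
  rewrite (eq_bigr (fun i : 'I_N.+1 => odd (X i 0) + \sum_(j < N) odd (X i j.+1)));
    last by move=> i _; rewrite big_ord_recl.
  by rewrite big_split big_ord_recl /=; congr (_ + _ + _); exact: exchange_big.
by apply/eqP; rewrite -(eqn_add2l (odd (X 0 0))) odds_Tseq_box box oddsR oddsS -!addnA.
Qed.

End OddCoefficient.
End MilnorMatrix.

Theorem mainTheorem7 (R S : seq nat) (N : nat) (X : nat -> nat -> nat) :
  milnor_matrix N X R S ->
  bcoef N X = 1 ->
  vfun (Tseq N X) = vfun R + vfun S ->
  uexp N X R S = 0%R.
Proof.
move=> [X_supp [X_rows X_cols]] X_bcoef v_additive.
rewrite /uexp !chow_odds (odds_additive _ _ _ _ X_supp X_rows X_cols X_bcoef v_additive).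
by rewrite PoszD opprK -opprD addNr.
Qed.
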